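(* Let $d,N\ge 1$ be integers, let $\mathbb{K},\mathbb{M}$ be real skew-symmetric $d\times d$ matrices, let $S:\mathbb{R}^d\to\mathbb{R}$ be smooth, and let $\mathcal{D}_h$ be a real $N\times N$ matrix (no skew-symmetry is assumed). Put $\mathcal{C}_h=\mathcal{D}_h\otimes \mathbb{I}_d$. Let $z_h(t)=(z_{h,0}(t),\dots,z_{h,N-1}(t))\in\mathbb{R}^{dN}$, $z_{h,j}(t)\in\mathbb{R}^d$, be a differentiable solution of the semi-discrete system $$\mathbb{K}\,\frac{d z_{h,j}}{dt}(t)+\mathbb{M}\,\big(\mathcal{C}_h z_h(t)\big)_j=\nabla S\big(z_{h,j}(t)\big),\qquad j=0,\dots,N-1.$$ For $j=0,\dots,N-1$ define $$\mathfrak{E}_j=S(z_{h,j})-\tfrac12\, z_{h,j}^{\top}\mathbb{M}\,(\mathcal{C}_h z_h)_j,\qquad \mathfrak{F}_j=\tfrac12\, z_{h,j}^{\top}\mathbb{M}\,\frac{dz_{h,j}}{dt},$$ $$\mathfrak{I}_j=\tfrac12\, z_{h,j}^{\top}\mathbb{K}\,(\mathcal{C}_h z_h)_j,\qquad \mathfrak{M}_j=S(z_{h,j})-\tfrac12\, z_{h,j}^{\top}\mathbb{K}\,\frac{dz_{h,j}}{dt}.$$ Then, for every $j$, $$\frac{d\mathfrak{E}_j}{dt}+\nabla_h\mathfrak{F}_j=0,\qquad \frac{d\mathfrak{I}_j}{dt}+\nabla_h\mathfrak{M}_j=0,$$ where $\nabla_h$ is the discrete spatial derivative described in the context.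
   Context: For $z=(z_0,\dots,z_{N-1})\in\mathbb{R}^{dN}$ with $z_j\in\mathbb{R}^d$, $(\mathcal{C}_h z)_j=\sum_{k=0}^{N-1}(\mathcal{D}_h)_{jk}z_k$ ($\mathcal{D}_h$ is a grid operator approximating $\partial_x$ under periodic boundary conditions). The discrete gradient $\nabla_h$ is defined, for a smooth function $Q$ of the state at node $j$, by $\nabla_h Q(z_j)=\nabla Q(z_j)^{\top}(\mathcal{C}_h z)_j$, i.e. the chain rule with the derivative $\partial_x$ of the state replaced by $\mathcal{C}_h z$; for quantities that also involve the time derivative $\dot z=dz_h/dt$, every occurrence of the state (including in $\dot z$) is differentiated this way, so that explicitly $\nabla_h\mathfrak{F}_j=\tfrac12(\mathcal{C}_h z_h)_j^{\top}\mathbb{M}\,\dot z_{h,j}+\tfrac12 z_{h,j}^{\top}\mathbb{M}\,(\mathcal{C}_h\dot z_h)_j$ and $\nabla_h\mathfrak{M}_j=\nabla S(z_{h,j})^{\top}(\mathcal{C}_h z_h)_j-\tfrac12(\mathcal{C}_h z_h)_j^{\top}\mathbb{K}\,\dot z_{h,j}-\tfrac12 z_{h,j}^{\top}\mathbb{K}\,(\mathcal{C}_h \dot z_h)_j$. *)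

From HB Require Import structures.
From mathcomp Require Import all_boot all_order all_algebra.
From mathcomp Require Import all_classical all_reals all_analysis.
Set Implicit Arguments. Unset Strict Implicit. Unset Printing Implicit Defensive.
Import Order.TTheory GRing.Theory Num.Theory.
Import numFieldNormedType.Exports.
Local Open Scope ring_scope.

Section Defs.
Variables (R : realType) (d N : nat).

Fixpoint iterD (vs : seq 'cV[R]_d) (f : 'cV[R]_d -> R) : 'cV[R]_d -> R :=
  match vs with
  | [::] => f
  | v :: vs' => fun x => 'D_v (iterD vs' f) x
  end.

Definition smooth (f : 'cV[R]_d -> R) : Prop :=
  forall (vs : seq 'cV[R]_d) (x : 'cV[R]_d), differentiable (iterD vs f) x.

Definition grad (f : 'cV[R]_d -> R) (x : 'cV[R]_d) : 'cV[R]_d :=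
  \col_(i < d) 'D_(delta_mx i ord0) f x.

(* (C_h z)_j = sum_k (D_h)_{jk} z_k,  C_h = D_h (x) I_d *)
Definition Cop (D : 'M[R]_N) (z : 'I_N -> 'cV[R]_d) (j : 'I_N) : 'cV[R]_d :=
  \sum_(k < N) D j k *: z k.

Definition qf (u : 'cV[R]_d) (A : 'M[R]_d) (v : 'cV[R]_d) : R :=
  (u^T *m A *m v) ord0 ord0.

Definition zdot (z : R -> 'I_N -> 'cV[R]_d) (t : R) (j : 'I_N) : 'cV[R]_d :=
  derive1 (fun s => z s j) t.

Variables (S : 'cV[R]_d -> R) (K M : 'M[R]_d) (D : 'M[R]_N)
          (z : R -> 'I_N -> 'cV[R]_d).

Definition Efrak (j : 'I_N) (t : R) : R :=
  S (z t j) - 2^-1 * qf (z t j) M (Cop D (z t) j).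
Definition Ffrak (j : 'I_N) (t : R) : R :=
  2^-1 * qf (z t j) M (zdot z t j).
Definition Ifrak (j : 'I_N) (t : R) : R :=
  2^-1 * qf (z t j) K (Cop D (z t) j).
Definition Mfrak (j : 'I_N) (t : R) : R :=
  S (z t j) - 2^-1 * qf (z t j) K (zdot z t j).

(* discrete spatial derivatives, as given explicitly in the context *)
Definition nablah_F (j : 'I_N) (t : R) : R :=
  2^-1 * qf (Cop D (z t) j) M (zdot z t j)
  + 2^-1 * qf (z t j) M (Cop D (zdot z t) j).
Definition nablah_M (j : 'I_N) (t : R) : R :=
  ((grad S (z t j))^T *m Cop D (z t) j) ord0 ord0
  - 2^-1 * qf (Cop D (z t) j) K (zdot z t j)
  - 2^-1 * qf (z t j) K (Cop D (zdot z t) j).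

End Defs.

From HB Require Import structures.
From mathcomp Require Import all_boot all_order all_algebra.
From mathcomp Require Import all_classical all_reals all_analysis.
From mathcomp Require Import ring lra.
Set Implicit Arguments. Unset Strict Implicit. Unset Printing Implicit Defensive.
Import Order.TTheory GRing.Theory Num.Theory.
Import numFieldNormedType.Exports.
Local Open Scope ring_scope.

(* Both laws are the product rule plus the equation of motion. Differentiating
   the densities produces the terms grad S . z' and grad S . C_h z; substituting
   grad S = K z' + M C_h z turns them into quadratic forms in z' and C_h z, the
   diagonal terms z'^T K z' and (C_h z)^T M (C_h z) vanish by skew-symmetry, and
   what remains cancels against the discrete fluxes, again by skew-symmetry. *)

Section SkewForms.
Variables (R : realType) (d : nat).
Implicit Types (A B : 'M[R]_d) (a b c : 'cV[R]_d).

Lemma qfN A a b : qf a (- A) b = - qf a A b.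
Proof. by rewrite /qf mulmxN mulNmx mxE. Qed.

Lemma qf_trmx A a b : qf a A^T b = qf b A a.
Proof.
rewrite /qf; have -> : a^T *m A^T *m b = (b^T *m A *m a)^T.
  by rewrite !trmx_mul trmxK mulmxA.
by rewrite mxE.
Qed.

Lemma qf_skewC A a b : A^T = - A -> qf a A b = - qf b A a.
Proof. by move=> skA; rewrite -qf_trmx skA qfN. Qed.

Lemma qf_skew_diag A a : A^T = - A -> qf a A a = 0.
Proof. by move=> skA; have := qf_skewC a a skA; lra. Qed.

Lemma dot_mulmxDl A B a b c :
  ((A *m a + B *m b)^T *m c) ord0 ord0 = qf a A^T c + qf b B^T c.
Proof. by rewrite raddfD mulmxDl mxE /= !trmx_mul. Qed.

End SkewForms.

Section ProductAndChainRules.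
Variable R : realType.

Lemma is_derive_mx_entry m n (u : R -> 'M[R]_(m, n)) u' (t : R) i j :
  is_derive t 1 u u' -> is_derive t 1 (fun s => u s i j) (u' i j).
Proof.
move=> du; apply: DeriveDef; first exact: (derivable_mxP u t 1).1 _ i j.
have /matrixP/(_ i j) : 'D_1 u t = u' by exact: derive_val.
by rewrite derive_mx // mxE.
Qed.

Variable d : nat.

Lemma qf_sum (A : 'M[R]_d) a b :
  qf a A b = \sum_(i < d) \sum_(k < d) A i k * (a i ord0 * b k ord0).
Proof.
rewrite /qf !mxE [RHS]exchange_big /=; apply: eq_bigr => k _.
rewrite !mxE big_distrl /=; apply: eq_bigr => i _; rewrite !mxE; ring.
Qed.

Lemma is_derive_qf (u v : R -> 'cV[R]_d) u' v' (A : 'M[R]_d) (t : R) :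
  is_derive t 1 u u' -> is_derive t 1 v v' ->
  is_derive t 1 (fun s => qf (u s) A (v s)) (qf u' A (v t) + qf (u t) A v').
Proof.
move=> du dv.
have -> : (fun s => qf (u s) A (v s)) =
    \sum_(i < d) \sum_(k < d) (fun s => A i k * (u s i ord0 * v s k ord0)).
  apply/funext => s; rewrite qf_sum fct_sumE; apply: eq_bigr => i _.
  by rewrite fct_sumE.
rewrite !qf_sum -big_split; apply: is_derive_sum => i /=.
rewrite -big_split; apply: is_derive_sum => k /=.
have := is_deriveZ (A i k)
  (is_deriveM (is_derive_mx_entry i ord0 du) (is_derive_mx_entry k ord0 dv)).
by move/is_derive_eq; apply; rewrite /GRing.scale /=; ring.
Qed.

Lemma is_derive_comp_grad (S : 'cV[R]_d -> R) (u : R -> 'cV[R]_d) u' (t : R) :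
  (forall x, differentiable S x) -> is_derive t 1 u u' ->
  is_derive t 1 (fun s => S (u s)) (((grad S (u t))^T *m u') ord0 ord0).
Proof.
move=> dS du.
have du1 : differentiable u t by apply/derivable1_diffP.
have dSu : differentiable (S \o u) t by apply: differentiable_comp.
apply: DeriveDef; first exact/(derivable1_diffP (S \o u) t).2.
rewrite -derive1E derive1E' // diff_comp //= -derive1E' // derive1E derive_val.
rewrite {1}(matrix_sum_delta u') linear_sum /= mxE.
apply: eq_bigr => i _; rewrite big_ord1 linearZ /= !mxE.
by rewrite -deriveE // mulrC.
Qed.

Lemma is_derive_Cop N (D : 'M[R]_N) (z : R -> 'I_N -> 'cV[R]_d) z' j (t : R) :
  (forall k, is_derive t 1 (fun s => z s k) (z' k)) ->
  is_derive t 1 (fun s => Cop D (z s) j) (Cop D z' j).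
Proof.
move=> dz.
have -> : (fun s => Cop D (z s) j) = \sum_(k < N) (D j k \*: (fun s => z s k)).
  by apply/funext => s; rewrite /Cop fct_sumE.
by apply: is_derive_sum => k; apply: is_deriveZ.
Qed.

End ProductAndChainRules.

Section ConservationLaws.
Variables (R : realType) (d N : nat) (K M : 'M[R]_d) (S : 'cV[R]_d -> R).
Variables (D : 'M[R]_N) (z : R -> 'I_N -> 'cV[R]_d).
Hypotheses (skK : K^T = - K) (skM : M^T = - M).
Hypothesis dS : forall x, differentiable S x.
Hypothesis dz : forall t j, derivable (fun s => z s j) t 1.
Hypothesis eq_motion : forall t j,
  K *m zdot z t j + M *m Cop D (z t) j = grad S (z t j).

Lemma is_derive_node (t : R) j : is_derive t 1 (fun s => z s j) (zdot z t j).
Proof. by have := derivableP (@dz t j); rewrite /zdot derive1E. Qed.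

Lemma grad_dot_zdot (t : R) j :
  ((grad S (z t j))^T *m zdot z t j) ord0 ord0 = qf (zdot z t j) M (Cop D (z t) j).
Proof. by rewrite -eq_motion dot_mulmxDl !qf_trmx qf_skew_diag // add0r. Qed.

Lemma grad_dot_Cop (t : R) j :
  ((grad S (z t j))^T *m Cop D (z t) j) ord0 ord0 = qf (Cop D (z t) j) K (zdot z t j).
Proof. by rewrite -eq_motion dot_mulmxDl !qf_trmx qf_skew_diag // addr0. Qed.

Lemma is_derive_Efrak j (t : R) : is_derive t 1 (Efrak S M D z j)
  (2^-1 * (qf (zdot z t j) M (Cop D (z t) j) - qf (z t j) M (Cop D (zdot z t) j))).
Proof.
have dC := is_derive_Cop D j (is_derive_node t).
have := is_deriveB (is_derive_comp_grad dS (is_derive_node t j))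
  (is_deriveZ 2^-1 (is_derive_qf M (is_derive_node t j) dC)).
by move/is_derive_eq; apply; rewrite grad_dot_zdot /GRing.scale /=; lra.
Qed.

Lemma is_derive_Ifrak j (t : R) : is_derive t 1 (Ifrak K D z j)
  (2^-1 * (qf (zdot z t j) K (Cop D (z t) j) + qf (z t j) K (Cop D (zdot z t) j))).
Proof.
have := is_deriveZ 2^-1
  (is_derive_qf K (is_derive_node t j) (is_derive_Cop D j (is_derive_node t))).
by move/is_derive_eq; apply.
Qed.

Lemma energy_conservation j (t : R) :
  derivable (Efrak S M D z j) t 1 /\
  derive1 (Efrak S M D z j) t + nablah_F M D z j t = 0.
Proof.
have dE := is_derive_Efrak j t; split => //.
rewrite derive1E derive_val /nablah_F (qf_skewC (Cop D (z t) j) _ skM); lra.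
Qed.

Lemma momentum_conservation j (t : R) :
  derivable (Ifrak K D z j) t 1 /\
  derive1 (Ifrak K D z j) t + nablah_M S K D z j t = 0.
Proof.
have dI := is_derive_Ifrak j t; split => //.
rewrite derive1E derive_val /nablah_M grad_dot_Cop.
rewrite (qf_skewC (Cop D (z t) j) _ skK); lra.
Qed.

End ConservationLaws.

Theorem theorem1 (R : realType) (d N : nat) (hd : (1 <= d)%N) (hN : (1 <= N)%N)
  (K M : 'M[R]_d) (hK : K^T = - K) (hM : M^T = - M)
  (S : 'cV[R]_d -> R) (hS : smooth S)
  (D : 'M[R]_N)
  (z : R -> 'I_N -> 'cV[R]_d)
  (hz : forall (t : R) (j : 'I_N), derivable (fun s => z s j) t 1)
  (hsol : forall (t : R) (j : 'I_N),
     K *m zdot z t j + M *m Cop D (z t) j = grad S (z t j)) :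
  forall (j : 'I_N) (t : R),
    (derivable (fun s => Efrak S M D z j s) t 1 /\
     derive1 (fun s => Efrak S M D z j s) t + nablah_F M D z j t = 0) /\
    (derivable (fun s => Ifrak K D z j s) t 1 /\
     derive1 (fun s => Ifrak K D z j s) t + nablah_M S K D z j t = 0).
Proof.
have dS x : differentiable S x := hS [::] x.
move=> j t; split.
- exact: energy_conservation hK hM dS hz hsol j t.
- exact: momentum_conservation hK hM hz hsol j t.
Qed.
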